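(* Let $L\subseteq Q$ be an extension of Lie algebras such that $Q$ is a weak algebra of quotients of $L$, and let $I$ be an ideal of $L$ with $\mathrm{Ann}_L(I)=0$. Then $\mathrm{r.ann}_{A(Q)}(A_Q(I))=0$.
   Context: Lie algebras over a commutative unital ring $\Phi$. $\mathrm{ad}_x(y)=[x,y]$; $A(Q)$ is the associative subalgebra of $\mathrm{End}_\Phi(Q)$ generated by all $\mathrm{ad}_x$, $x\in Q$; for $I\subseteq L\subseteq Q$, $A_Q(I)$ is the subalgebra of $A(Q)$ generated by $\{\mathrm{ad}_x:x\in I\}$. $\mathrm{Ann}_L(X)=\{a\in L:[a,X]=0\}$. For an associative algebra $B$ and $X\subseteq B$, $\mathrm{r.ann}_B(X)=\{b\in B:Xb=0\}$. $Q$ is a weak algebra of quotients of $L$ if for every nonzero $q\in Q$ there is $x\in L$ with $0\ne[x,q]\in L$. *)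

From HB Require Import structures.
From mathcomp Require Import all_boot all_order all_algebra.
Set Implicit Arguments. Unset Strict Implicit. Unset Printing Implicit Defensive.
Import GRing.Theory.
Local Open Scope ring_scope.

Definition is_lie_bracket (R : comPzRingType) (Q : lmodType R)
    (br : Q -> Q -> Q) : Prop :=
  [/\ (forall (a : R) x y z, br (a *: x + y) z = a *: br x z + br y z),
      (forall (a : R) x y z, br x (a *: y + z) = a *: br x y + br x z),
      (forall x, br x x = 0) &
      (forall x y z, br x (br y z) + br y (br z x) + br z (br x y) = 0)].

Definition is_submodule (R : comPzRingType) (Q : lmodType R) (S : Q -> Prop) :=
  [/\ S 0, (forall x y, S x -> S y -> S (x + y)) &
      (forall (a : R) x, S x -> S (a *: x))].

Definition is_lie_subalgebra (R : comPzRingType) (Q : lmodType R)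
    (br : Q -> Q -> Q) (L : Q -> Prop) :=
  is_submodule L /\ (forall x y, L x -> L y -> L (br x y)).

Definition is_lie_ideal (R : comPzRingType) (Q : lmodType R)
    (br : Q -> Q -> Q) (L I : Q -> Prop) :=
  [/\ (forall x, I x -> L x), is_submodule I &
      (forall x y, L x -> I y -> I (br x y))].

Definition ann_zero (R : comPzRingType) (Q : lmodType R)
    (br : Q -> Q -> Q) (L I : Q -> Prop) :=
  forall a, L a -> (forall y, I y -> br a y = 0) -> a = 0.

Definition weak_quotients (R : comPzRingType) (Q : lmodType R)
    (br : Q -> Q -> Q) (L : Q -> Prop) :=
  forall q : Q, q <> 0 -> exists x, [/\ L x, br x q <> 0 & L (br x q)].

Definition ad (R : comPzRingType) (Q : lmodType R) (br : Q -> Q -> Q) (x : Q)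
  : Q -> Q := br x.

(* The (non-unital) associative R-subalgebra of End_R(Q) generated by the
   ad_x, x in S; endomorphisms are represented as functions Q -> Q. *)
Inductive gen_ad_alg (R : comPzRingType) (Q : lmodType R)
    (br : Q -> Q -> Q) (S : Q -> Prop) : (Q -> Q) -> Prop :=
| gaa_ad x : S x -> gen_ad_alg br S (ad br x)
| gaa_zero : gen_ad_alg br S (fun _ => 0)
| gaa_add f g : gen_ad_alg br S f -> gen_ad_alg br S g ->
    gen_ad_alg br S (fun v => f v + g v)
| gaa_scale (c : R) f : gen_ad_alg br S f -> gen_ad_alg br S (fun v => c *: f v)
| gaa_comp f g : gen_ad_alg br S f -> gen_ad_alg br S g ->
    gen_ad_alg br S (fun v => f (g v)).

Definition A_alg (R : comPzRingType) (Q : lmodType R) (br : Q -> Q -> Q) :=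
  gen_ad_alg br (fun _ => True).
Definition A_alg_of (R : comPzRingType) (Q : lmodType R) (br : Q -> Q -> Q)
    (I : Q -> Prop) := gen_ad_alg br I.

Definition rann (R : comPzRingType) (Q : lmodType R) (br : Q -> Q -> Q)
    (I : Q -> Prop) (b : Q -> Q) : Prop :=
  A_alg br b /\ forall a, A_alg_of br I a -> forall v, a (b v) = 0.

From mathcomp Require Import all_boot all_order all_algebra.
From Stdlib Require Import Classical.
Set Implicit Arguments.
Unset Strict Implicit.
Unset Printing Implicit Defensive.
Import GRing.Theory.
Local Open Scope ring_scope.

(* Every b in the right annihilator kills A_Q(I) and in particular all ad_y,
   y in I, so each value b v lies in the centralizer of I in Q. By the Jacobi
   identity this centralizer is stable under ad_x for x in L, because I is an
   ideal of L. If it contained some q <> 0, the weak-quotient property would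
   give x in L with 0 <> [x,q] in L, and [x,q] would be a nonzero element of
   Ann_L(I). *)

Section LieQuotients.

Variables (R : comPzRingType) (Q : lmodType R) (br : Q -> Q -> Q).
Hypothesis lie : is_lie_bracket br.

Lemma lie_bracketDl x y z : br (x + y) z = br x z + br y z.
Proof.
by case: lie => linl _ _ _; have := linl 1 x y z; rewrite !scale1r.
Qed.

Lemma lie_bracketDr x y z : br x (y + z) = br x y + br x z.
Proof.
by case: lie => _ linr _ _; have := linr 1 x y z; rewrite !scale1r.
Qed.

Lemma lie_bracket0r x : br x 0 = 0.
Proof.
apply: (@addrI _ (br x 0)).
by rewrite addr0 -lie_bracketDr addr0.
Qed.

Lemma lie_anticomm x y : br y x = - br x y.
Proof.
case: lie => _ _ alt _.
have := alt (x + y).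
rewrite lie_bracketDl !lie_bracketDr !alt add0r addr0 => /eqP.
by rewrite addrC addr_eq0 => /eqP.
Qed.

Lemma lie_bracketNr x y : br x (- y) = - br x y.
Proof.
apply/eqP; rewrite -addr_eq0 -lie_bracketDr addNr.
exact/eqP/lie_bracket0r.
Qed.

Lemma lie_bracket_leibniz x y z : br x (br y z) = br (br x y) z + br y (br x z).
Proof.
case: lie => _ _ _ jac.
have /eqP := jac x y z; rewrite -addrA addr_eq0 => /eqP ->.
rewrite (lie_anticomm (br x y) z) (lie_anticomm x z) lie_bracketNr.
by rewrite opprD !opprK addrC.
Qed.

Variables (L I : Q -> Prop).

Definition centralizes_ideal (q : Q) := forall y, I y -> br y q = 0.

Lemma lie_ideal_bracketl y x : is_lie_ideal br L I -> I y -> L x -> I (br y x).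
Proof.
case=> _ [_ _ Iscale] Iideal Iy Lx.
by rewrite lie_anticomm -scaleN1r; apply/Iscale/Iideal.
Qed.

Lemma centralizes_ideal_bracket x q :
  is_lie_ideal br L I -> L x -> centralizes_ideal q -> centralizes_ideal (br x q).
Proof.
move=> idI Lx cq y Iy.
rewrite lie_bracket_leibniz (cq y Iy) lie_bracket0r addr0.
exact/cq/lie_ideal_bracketl.
Qed.

Lemma centralizes_ideal_eq0 q :
  weak_quotients br L -> is_lie_ideal br L I -> ann_zero br L I ->
  centralizes_ideal q -> q = 0.
Proof.
move=> wq idI ann cq; apply: NNPP => q_neq0.
have [x [Lx xq_neq0 Lxq]] := wq q q_neq0.
apply: xq_neq0; apply: ann => // y Iy.
by rewrite lie_anticomm (centralizes_ideal_bracket idI Lx cq Iy) ?oppr0.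
Qed.

End LieQuotients.

Theorem mainTheorem8 (R : comPzRingType) (Q : lmodType R) (br : Q -> Q -> Q)
    (L I : Q -> Prop) :
  is_lie_bracket br ->
  is_lie_subalgebra br L ->
  weak_quotients br L ->
  is_lie_ideal br L I ->
  ann_zero br L I ->
  forall b : Q -> Q, rann br I b -> forall v, b v = 0.
Proof.
move=> lie _ wq idI ann b [_ b_rann] v.
apply: (centralizes_ideal_eq0 lie wq idI ann) => y Iy.
by apply: (b_rann (ad br y)); constructor.
Qed.
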